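(* Let $\mu>0$ and $f\in C([0,1])$. Then $|\mathscr{L}_n^K(f,x)-f(x)|=o(n^{-1})$ as $n\to+\infty$ for every $0<x<1$ if and only if $f$ is a classical solution on $(0,1)$ of the differential equation $A(x)f_\mu'(x)+B(x)f_\mu''(x)=0$, where $A(x):=\frac12+\frac{x-x^2}{2(1+\mu)}-x$ and $B(x):=\frac{x-x^2}{2}$; equivalently, $\big(1+\mu-x(1+2\mu)-x^2\big)f_\mu'(x)+(1+\mu)(x-x^2)f_\mu''(x)=0$, $0<x<1$.
   Context: Fix $\mu>0$. Let $\ln_\mu(x):=\ln(1+\mu+x)$ for $x\in[0,1]$, and for $f:[0,1]\to\mathbb{R}$ let $f_\mu(x):=f(x)/\ln_\mu(x)$. Let $p_{n,k}(y):=\binom{n}{k}y^k(1-y)^{n-k}$ and $a_{n+1}(x):=\dfrac{\ln\left(1+\frac{x}{(n+1)(1+\mu)}\right)}{\ln\left(1+\frac{1}{(n+1)(1+\mu)}\right)}$, $x\in[0,1]$. For $n\in\mathbb{N}$ define $\mathscr{L}_n^K(f,x)=\mathscr{L}_n^K f(x):=\ln_\mu(x)\sum_{k=0}^n p_{n,k}(a_{n+1}(x))\,(n+1)\int_{k/(n+1)}^{(k+1)/(n+1)} f_\mu(t)\,dt$, $x\in[0,1]$. *)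

From Stdlib Require Import Reals.
From Coquelicot Require Import Coquelicot.
Open Scope R_scope.

Definition lnmu (mu x : R) : R := ln (1 + mu + x).

Definition fmu (mu : R) (f : R -> R) (x : R) : R := f x / lnmu mu x.

Definition pnk (n k : nat) (y : R) : R := Binomial.C n k * y ^ k * (1 - y) ^ (n - k).

Definition a_succ (mu : R) (n : nat) (x : R) : R :=
  ln (1 + x / ((INR n + 1) * (1 + mu))) / ln (1 + 1 / ((INR n + 1) * (1 + mu))).

Definition LK (mu : R) (n : nat) (f : R -> R) (x : R) : R :=
  lnmu mu x *
  sum_f_R0 (fun k => pnk n k (a_succ mu n x) * (INR n + 1) *
                     RInt (fmu mu f) (INR k / (INR n + 1)) (INR (S k) / (INR n + 1))) n.

Definition Acoef (mu x : R) : R := / 2 + (x - x ^ 2) / (2 * (1 + mu)) - x.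
Definition Bcoef (x : R) : R := (x - x ^ 2) / 2.

(* Both conditions say that [f_mu] is constant on (0, 1).

   [L_n^K f = ln_mu T_n f_mu], where [T_n] is a positive Kantorovich-type operator
   reproducing constants.  The function [s x = exp (- x / (1 + mu)) / (x (1 - x))] solves
   [A s + B s' = 0], so the classical solutions of [A F' + B F'' = 0] are [c1 + c2 S] with
   [S' = s]; since [S] diverges logarithmically at 0 while [f_mu] is bounded, [c2 = 0], and a
   constant [f_mu] is reproduced exactly.

   Conversely, Voronovskaya's formula [n (T_n Q - Q) (x) -> A Q' (x) + B Q'' (x)] for
   quadratics [Q], together with a Chernoff bound localising [T_n], shows that
   [A Q' (x) + B Q'' (x) >= 0] whenever [f_mu - Q] has a local maximum at [x]: if
   [n (T_n f_mu - f_mu) -> 0], both [f_mu] and [- f_mu] are viscosity subsolutions.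
   Comparison with the strict supersolutions [c1 + c2 S - e exp (K x)] on every [[a, b]]
   in (0, 1) yields [f_mu = c1 + c2 S], and boundedness again forces [c2 = 0]. *)

From Stdlib Require Import Reals Lra Lia.
From Coquelicot Require Import Coquelicot.
Open Scope R_scope.

Lemma is_derive_continuity_pt (g : R -> R) x l : is_derive g x l -> continuity_pt g x.
Proof.
  intro H. apply continuity_pt_filterlim. apply (ex_derive_continuous g x). now exists l.
Qed.

Lemma is_derive_nonneg_le (g dg : R -> R) a b : a <= b ->
  (forall x, a <= x <= b -> is_derive g x (dg x)) ->
  (forall x, a <= x <= b -> 0 <= dg x) -> g a <= g b.
Proof.
  intros hab hd hp.
  destruct (MVT_gen g a b dg) as [c [hc he]];
    rewrite ?Rmin_left, ?Rmax_right in * by lra.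
  - intros x hx. apply hd; lra.
  - intros x hx. apply (is_derive_continuity_pt g x (dg x)), hd; lra.
  - assert (0 <= dg c * (b - a)) by (apply Rmult_le_pos; [apply hp|]; lra). lra.
Qed.

Lemma is_derive_0_const (F : R -> R) a b :
  (forall x, a < x < b -> is_derive F x 0) ->
  forall x y, a < x < b -> a < y < b -> F x = F y.
Proof.
  intros hd x y hx hy.
  assert (hin : forall z, Rmin x y <= z <= Rmax x y -> a < z < b).
  { intros z hz. unfold Rmin, Rmax in hz. destruct (Rle_dec x y); lra. }
  destruct (MVT_gen F x y (fun _ => 0)) as [c [hc he]].
  - intros z hz. apply hd, hin. lra.
  - intros z hz. apply (is_derive_continuity_pt F z 0), hd, hin, hz.
  - lra.
Qed.

(* Mean value theorem for [phi - P]: since [phi1' (x0) = phi2 < P''], the derivative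
   [phi1 - P'] has the sign of [x0 - t] between [x0] and [t]. *)
Lemma taylor2_upper (phi phi1 : R -> R) x0 phi2 r eta : 0 < r -> 0 < eta ->
  (forall t, Rabs (t - x0) < r -> is_derive phi t (phi1 t)) -> is_derive phi1 x0 phi2 ->
  exists d, 0 < d /\ forall t, Rabs (t - x0) < d ->
    phi t <= phi x0 + phi1 x0 * (t - x0) + (phi2 / 2 + eta) * (t - x0)^2.
Proof.
  intros hr heta hd1 hd2.
  apply is_derive_Reals in hd2. destruct (hd2 eta heta) as [d1 hd1'].
  exists (Rmin d1 r). split; [apply Rmin_pos; [apply cond_pos | lra] |].
  intros t ht. pose proof (Rmin_l d1 r). pose proof (Rmin_r d1 r).
  set (P := fun tau => phi x0 + phi1 x0 * (tau - x0) + (phi2 / 2 + eta) * (tau - x0)^2).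
  set (dg := fun tau => phi1 tau - (phi1 x0 + (phi2 + 2 * eta) * (tau - x0))).
  assert (hin : forall c, Rmin x0 t <= c <= Rmax x0 t -> Rabs (c - x0) <= Rabs (t - x0)).
  { intros c hc. unfold Rmin, Rmax in hc. destruct (Rle_dec x0 t).
    - rewrite !Rabs_right; lra.
    - rewrite !Rabs_left1; lra. }
  assert (hg : forall c, Rmin x0 t <= c <= Rmax x0 t ->
                 is_derive (fun tau => phi tau - P tau) c (dg c)).
  { intros c hc. pose proof (hin c hc).
    apply (is_derive_minus phi P); [apply hd1; lra |].
    unfold P. auto_derive; auto. field. }
  destruct (MVT_gen (fun tau => phi tau - P tau) x0 t dg) as [c [hc he]].
  - intros z hz. apply hg. lra.
  - intros z hz. apply (is_derive_continuity_pt _ z (dg z)), hg, hz.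
  - assert (hdc : dg c * (t - x0) <= 0).
    { destruct (Req_dec c x0) as [->|hne].
      - unfold dg. replace (x0 - x0) with 0 by ring. lra.
      - pose proof (hin c hc).
        specialize (hd1' (c - x0) ltac:(lra) ltac:(lra)).
        replace (x0 + (c - x0)) with c in hd1' by ring.
        apply Rabs_lt_between in hd1'.
        assert (hs : 0 <= (c - x0) * (t - x0)).
        { unfold Rmin, Rmax in hc. destruct (Rle_dec x0 t); nra. }
        set (th := (phi1 c - phi1 x0) / (c - x0)) in *.
        replace (dg c * (t - x0)) with ((th - phi2 - 2 * eta) * ((c - x0) * (t - x0)))
          by (unfold dg, th; field; lra).
        nra. }
    unfold P in he. lra.
Qed.

Lemma exp_le_compat a b : a <= b -> exp a <= exp b.
Proof.
  intro h. destruct (Rle_lt_or_eq_dec _ _ h) as [hlt | ->]; [left; now apply exp_increasing | lra].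
Qed.

Lemma exp_pow_INR s k : exp s ^ k = exp (s * INR k).
Proof.
  induction k as [|k IH]; [simpl; now rewrite Rmult_0_r, exp_0 |].
  rewrite S_INR. simpl. rewrite IH, <- exp_plus. f_equal. ring.
Qed.

Lemma ln_1p_lower s : 0 <= s -> s - s^2/2 <= ln (1 + s).
Proof.
  intro hs.
  pose proof (is_derive_nonneg_le (fun t => ln (1 + t) - t + t^2/2) (fun t => t^2/(1 + t)) 0 s hs)
    as H; cbv beta in H.
  rewrite Rplus_0_r, ln_1 in H.
  enough (0 - 0 + 0^2/2 <= ln (1 + s) - s + s^2/2) by lra.
  apply H.
  - intros x hx. auto_derive; [lra | field; lra].
  - intros x hx. apply Rdiv_le_0_compat; nra.
Qed.

Lemma ln_1p_upper s : 0 <= s -> ln (1 + s) <= s - s^2/2 + s^3/3.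
Proof.
  intro hs.
  pose proof (is_derive_nonneg_le (fun t => t - t^2/2 + t^3/3 - ln (1 + t))
                (fun t => t^3/(1 + t)) 0 s hs) as H; cbv beta in H.
  rewrite Rplus_0_r, ln_1 in H.
  enough (0 - 0^2/2 + 0^3/3 - 0 <= s - s^2/2 + s^3/3 - ln (1 + s)) by lra.
  apply H.
  - intros x hx. auto_derive; [lra | field; lra].
  - intros x hx. apply Rdiv_le_0_compat; [apply pow_le |]; lra.
Qed.

(* [exp s <= 1 / (1 - s)], and [1 / (1 - s) - 1 - s = s^2 / (1 - s)]. *)
Lemma exp_sub_1_sub_le s : s <= 1/2 -> exp s - 1 - s <= 2 * s^2.
Proof.
  intro hs. pose proof (exp_ineq1_le (- s)) as h.
  assert (hinv : exp s * exp (- s) = 1) by (rewrite <- exp_plus, Rplus_opp_r; apply exp_0).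
  assert (exp s * (1 - s) <= 1).
  { rewrite <- hinv. apply Rmult_le_compat_l; [left; apply exp_pos | lra]. }
  assert (s^2 * (1 - 2 * (1 - s)) <= 0) by nra.
  nra.
Qed.

Lemma exp_ge_sqr_div4 x : 0 <= x -> x^2/4 <= exp x.
Proof.
  intro hx. pose proof (exp_ineq1_le (x/2)).
  replace (exp x) with (exp (x/2) * exp (x/2)) by (rewrite <- exp_plus; f_equal; field).
  nra.
Qed.

Lemma continuity_pt_bounded01 (h : R -> R) : (forall t, continuity_pt h t) ->
  exists M, 0 <= M /\ forall t, 0 <= t <= 1 -> Rabs (h t) <= M.
Proof.
  intro hc.
  destruct (continuity_ab_maj (fun t => Rabs (h t)) 0 1) as [xM [hM _]]; [lra | |].
  - intros c _. apply (continuity_pt_comp h Rabs); [apply hc | apply Rcontinuity_abs].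
  - exists (Rabs (h xM)). split; [apply Rabs_pos | exact hM].
Qed.

Lemma continuity_ab_interior_max (g : R -> R) a b x :
  (forall t, a <= t <= b -> continuity_pt g t) -> a <= x <= b -> g a < g x -> g b < g x ->
  exists x0, a < x0 < b /\ forall t, a <= t <= b -> g t <= g x0.
Proof.
  intros hc hx ha hb.
  destruct (continuity_ab_maj g a b ltac:(lra) hc) as [x0 [hmax hx0]].
  exists x0. split; [| exact hmax]. pose proof (hmax x hx).
  split; apply Rnot_le_lt; intro; [assert (x0 = a) by lra | assert (x0 = b) by lra]; subst; lra.
Qed.

Lemma locally_interval x a b (P : R -> Prop) :
  a < x < b -> (forall t, a < t < b -> P t) -> locally x P.
Proof.
  intros hx hP.
  assert (he : 0 < Rmin (x - a) (b - x)) by (apply Rmin_pos; lra).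
  exists (mkposreal _ he). intros t ht. apply hP.
  change (Rabs (t - x) < Rmin (x - a) (b - x)) in ht.
  apply Rabs_lt_between' in ht.
  pose proof (Rmin_l (x - a) (b - x)). pose proof (Rmin_r (x - a) (b - x)). lra.
Qed.

Lemma ex_RInt_continuity_pt (g : R -> R) a b :
  (forall t, continuity_pt g t) -> ex_RInt g a b.
Proof.
  intro hc. apply (ex_RInt_continuous (V := R_CompleteNormedModule)).
  intros z _. apply continuity_pt_filterlim, hc.
Qed.

Lemma RInt_le_const (h : R -> R) a b c : a <= b -> (forall t, continuity_pt h t) ->
  (forall t, a < t < b -> h t <= c) -> RInt h a b <= (b - a) * c.
Proof.
  intros hab hc hle.
  assert (H : RInt h a b <= RInt (fun _ => c) a b)
    by (apply RInt_le; auto using ex_RInt_continuity_pt, ex_RInt_const).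
  now rewrite RInt_const in H.
Qed.

Lemma is_lim_seq_of_eq (u : nat -> R) (l1 l2 : R) :
  is_lim_seq u l1 -> l1 = l2 -> is_lim_seq u l2.
Proof. now intros h <-. Qed.

Lemma is_lim_seq_inv_INR_S : is_lim_seq (fun n => / (INR n + 1)) 0.
Proof.
  assert (H : is_lim_seq (fun n => / INR n) 0)
    by (apply (is_lim_seq_inv _ p_infty); [apply is_lim_seq_INR | discriminate]).
  apply is_lim_seq_incr_1 in H.
  eapply is_lim_seq_ext; [|exact H]. intro n. now rewrite <- S_INR.
Qed.

Lemma is_lim_seq_INR_div_S : is_lim_seq (fun n => INR n / (INR n + 1)) 1.
Proof.
  apply (is_lim_seq_of_eq _ (1 - 0)); [|ring].
  eapply is_lim_seq_ext;
    [|exact (is_lim_seq_minus' _ _ _ _ (is_lim_seq_const 1) is_lim_seq_inv_INR_S)].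
  intro n. simpl. field. pose proof (pos_INR n). lra.
Qed.

Lemma is_lim_seq_INR_exp_neg c : 0 < c -> is_lim_seq (fun n => INR n * exp (- (c * INR n))) 0.
Proof.
  intro hc.
  apply (is_lim_seq_le_le (fun _ => 0) _ (fun n => 8 / c^2 * / (INR n + 1))).
  - intro n. pose proof (pos_INR n) as hn. pose proof (exp_pos (c * INR n)) as he.
    rewrite exp_Ropp. split; [apply Rmult_le_pos; [lra | left; apply Rinv_0_lt_compat; lra] |].
    pose proof (exp_ge_sqr_div4 (c * INR n) ltac:(nra)).
    apply (Rmult_le_reg_r (exp (c * INR n) * (INR n + 1))); [nra |].
    replace (INR n * / exp (c * INR n) * (exp (c * INR n) * (INR n + 1)))
      with (INR n * (INR n + 1)) by (field; lra).
    replace (8 / c ^ 2 * / (INR n + 1) * (exp (c * INR n) * (INR n + 1)))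
      with (8 / c^2 * exp (c * INR n)) by (field; lra).
    apply (Rle_trans _ (8 / c^2 * ((c * INR n)^2/4))); [| apply Rmult_le_compat_l; [|lra]].
    + replace (8 / c^2 * ((c * INR n)^2/4)) with (2 * INR n * INR n) by (field; lra).
      destruct n; [simpl; lra |]. pose proof (le_INR 1 (S n) ltac:(lia)). simpl in *. nra.
    + apply Rdiv_le_0_compat; nra.
  - apply is_lim_seq_const.
  - apply (is_lim_seq_of_eq _ (8 / c^2 * 0)); [|ring].
    apply is_lim_seq_mult'; [apply is_lim_seq_const | apply is_lim_seq_inv_INR_S].
Qed.

(** * The Bernstein basis *)

Lemma pnk_ge0 n k y : 0 <= y <= 1 -> 0 <= pnk n k y.
Proof.
  intro hy. unfold pnk, Binomial.C.
  apply Rmult_le_pos; [apply Rmult_le_pos |]; try (apply pow_le; lra).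
  apply Rdiv_le_0_compat; [apply pos_INR | apply Rmult_lt_0_compat; apply INR_fact_lt_0].
Qed.

Lemma pnk_mgf n y z : sum_f_R0 (fun k => pnk n k y * z ^ k) n = (y * z + (1 - y)) ^ n.
Proof.
  rewrite binomial. apply sum_eq. intros. unfold pnk. rewrite Rpow_mult_distr. ring.
Qed.

Lemma pnk_sum1 n y : sum_f_R0 (fun k => pnk n k y) n = 1.
Proof.
  transitivity ((y * 1 + (1 - y)) ^ n).
  - rewrite <- pnk_mgf. apply sum_eq. intros. rewrite pow1. ring.
  - replace (y * 1 + (1 - y)) with 1 by ring. apply pow1.
Qed.

Lemma pnk_succ m i y : (i <= m)%nat ->
  (INR i + 1) * pnk (S m) (S i) y = INR (S m) * y * pnk m i y.
Proof.
  intro hi. unfold pnk, Binomial.C.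
  replace (S m - S i)%nat with (m - i)%nat by lia.
  rewrite !fact_simpl, !mult_INR, !S_INR. simpl pow.
  field. repeat split; try apply INR_fact_neq_0. pose proof (pos_INR i). lra.
Qed.

Lemma pnk_mean n y : sum_f_R0 (fun k => INR k * pnk n k y) n = INR n * y.
Proof.
  destruct n as [|m]; [simpl; ring |].
  rewrite decomp_sum by lia. simpl Init.Nat.pred. rewrite Rmult_0_l, Rplus_0_l.
  rewrite (sum_eq _ (fun i => pnk m i y * (INR (S m) * y))).
  - rewrite <- scal_sum, pnk_sum1. ring.
  - intros i hi. rewrite S_INR at 1. rewrite pnk_succ by lia. ring.
Qed.

Lemma pnk_factorial_moment2 n y :
  sum_f_R0 (fun k => INR k * (INR k - 1) * pnk n k y) n = INR n * (INR n - 1) * y^2.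
Proof.
  destruct n as [|m]; [simpl; ring |].
  rewrite decomp_sum by lia. simpl Init.Nat.pred. rewrite !Rmult_0_l, Rplus_0_l.
  rewrite (sum_eq _ (fun i => INR i * pnk m i y * (INR (S m) * y))).
  - rewrite <- scal_sum, pnk_mean, S_INR. ring.
  - intros i hi. rewrite S_INR at 1 2.
    replace ((INR i + 1) * (INR i + 1 - 1) * pnk (S m) (S i) y)
      with (INR i * ((INR i + 1) * pnk (S m) (S i) y)) by ring.
    rewrite pnk_succ by lia. ring.
Qed.

Lemma pnk_quadratic n y c0 c1 c2 :
  sum_f_R0 (fun k => pnk n k y * (c0 + c1 * INR k + c2 * INR k ^ 2)) n
  = c0 + c1 * (INR n * y) + c2 * (INR n * y + INR n * (INR n - 1) * y^2).
Proof.
  rewrite (sum_eq _ (fun k => (pnk n k y * c0 + INR k * pnk n k y * (c1 + c2))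
                              + INR k * (INR k - 1) * pnk n k y * c2)) by (intros; ring).
  rewrite !plus_sum, <- !scal_sum.
  rewrite pnk_sum1, pnk_factorial_moment2, pnk_mean. ring.
Qed.

(* Chernoff's bound, from [1 + u <= exp u] and [exp s - 1 - s <= 2 s^2]. *)
Lemma pnk_mgf_centered_le n y s : 0 <= y <= 1 -> s <= 1/2 ->
  sum_f_R0 (fun k => pnk n k y * exp (s * (INR k - INR n * y))) n <= exp (2 * INR n * s^2).
Proof.
  intros hy hs.
  rewrite (sum_eq _ (fun k => pnk n k y * exp s ^ k * exp (- (s * INR n * y)))).
  2:{ intros k _. rewrite exp_pow_INR, Rmult_assoc, <- exp_plus. do 2 f_equal. ring. }
  rewrite <- scal_sum, pnk_mgf.
  pose proof (exp_ineq1_le (y * (exp s - 1))). pose proof (exp_ineq1_le s).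
  pose proof (exp_sub_1_sub_le s hs). pose proof (pos_INR n). pose proof (exp_pos s).
  assert (h : (y * exp s + (1 - y)) ^ n <= exp (y * (exp s - 1)) ^ n)
    by (apply pow_incr; nra).
  rewrite exp_pow_INR in h.
  apply (Rle_trans _ (exp (- (s * INR n * y)) * exp (y * (exp s - 1) * INR n))).
  - apply Rmult_le_compat_l; [left; apply exp_pos | exact h].
  - rewrite <- exp_plus. apply exp_le_compat.
    assert (y * (exp s - 1 - s) <= 2 * s^2) by nra.
    assert (INR n * (y * (exp s - 1 - s)) <= INR n * (2 * s^2)) by (apply Rmult_le_compat_l; lra).
    nra.
Qed.

(* [exp (s (|k - n y| - n eps))] dominates the indicator of [|k - n y| >= n eps]. *)
Lemma pnk_tail_le n y s eps : 0 <= y <= 1 -> 0 <= s <= 1/2 ->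
  sum_f_R0 (fun k => pnk n k y * (exp (s * (INR k - INR n * y - INR n * eps))
                                 + exp (s * (INR n * y - INR k - INR n * eps)))) n
  <= 2 * exp (INR n * (2 * s^2 - s * eps)).
Proof.
  intros hy hs.
  set (E := exp (- (s * INR n * eps))).
  rewrite (sum_eq _ (fun k => pnk n k y * exp (s * (INR k - INR n * y)) * E
                            + pnk n k y * exp (- s * (INR k - INR n * y)) * E)).
  2:{ intros k _. unfold E. rewrite !Rmult_assoc, <- !exp_plus, <- Rmult_plus_distr_l.
      f_equal; do 2 f_equal; ring. }
  rewrite plus_sum, <- !scal_sum.
  pose proof (pnk_mgf_centered_le n y s hy ltac:(lra)).
  pose proof (pnk_mgf_centered_le n y (- s) hy ltac:(lra)).
  replace (exp (INR n * (2 * s^2 - s * eps))) with (exp (2 * INR n * s^2) * E)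
    by (unfold E; rewrite <- exp_plus; f_equal; ring).
  replace ((- s)^2) with (s^2) in * by ring.
  assert (0 < E) by apply exp_pos. nra.
Qed.

(** * The nodes [a_(n+1)] *)

Definition node_step (mu : R) (n : nat) : R := / ((INR n + 1) * (1 + mu)).

Lemma node_step_bounds mu n : 0 < mu -> 0 < node_step mu n <= 1.
Proof.
  intro hmu. unfold node_step. pose proof (pos_INR n).
  split; [apply Rinv_0_lt_compat; nra |].
  rewrite <- Rinv_1. apply Rinv_le_contravar; nra.
Qed.

Lemma is_lim_seq_node_step mu : 0 < mu -> is_lim_seq (node_step mu) 0.
Proof.
  intro hmu. apply (is_lim_seq_of_eq _ (/ (1 + mu) * 0)); [|ring].
  eapply is_lim_seq_ext; [|exact (is_lim_seq_scal_l _ _ _ is_lim_seq_inv_INR_S)].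
  intro n. unfold node_step. rewrite Rinv_mult. simpl. ring.
Qed.

Lemma a_succ_node_step mu n x :
  a_succ mu n x = ln (1 + x * node_step mu n) / ln (1 + node_step mu n).
Proof. unfold a_succ, node_step, Rdiv. now rewrite Rmult_1_l. Qed.

Lemma ln_1p_pos h : 0 < h -> 0 < ln (1 + h).
Proof. intro. rewrite <- ln_1. apply ln_increasing; lra. Qed.

Lemma a_succ_bounds mu n x : 0 < mu -> 0 <= x <= 1 -> 0 <= a_succ mu n x <= 1.
Proof.
  intros hmu hx. rewrite a_succ_node_step. pose proof (node_step_bounds mu n hmu).
  set (h := node_step mu n) in *. pose proof (ln_1p_pos h ltac:(lra)).
  assert (0 <= ln (1 + x * h)) by (rewrite <- ln_1; apply ln_le; nra).
  assert (ln (1 + x * h) <= ln (1 + h)) by (apply ln_le; nra).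
  split; [apply Rdiv_le_0_compat; lra |].
  apply Rle_div_l; lra.
Qed.

Lemma ln_1p_div_lim (h : nat -> R) : (forall n, 0 < h n <= 1) -> is_lim_seq h 0 ->
  is_lim_seq (fun n => ln (1 + h n) / h n) 1.
Proof.
  intros hb hl.
  apply (is_lim_seq_le_le (fun n => 1 - h n / 2) _ (fun _ => 1)).
  - intro n. specialize (hb n). pose proof (ln_1p_lower (h n) ltac:(lra)).
    pose proof (ln_1p_upper (h n) ltac:(lra)).
    assert (h n ^ 3 / 3 <= h n ^ 2 / 2) by (simpl; nra).
    split; [apply Rle_div_r | apply Rle_div_l]; lra.
  - apply (is_lim_seq_of_eq _ (1 - 0 / 2)); [|field].
    apply is_lim_seq_minus'; [apply is_lim_seq_const |].
    apply is_lim_seq_div'; [exact hl | apply is_lim_seq_const | lra].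
  - apply is_lim_seq_const.
Qed.

Lemma ln_1p_defect_lim (h : nat -> R) x : 0 <= x <= 1 ->
  (forall n, 0 < h n <= 1) -> is_lim_seq h 0 ->
  is_lim_seq (fun n => (ln (1 + x * h n) - x * ln (1 + h n)) / h n ^ 2) ((x - x^2) / 2).
Proof.
  intros hx hb hl.
  apply (is_lim_seq_le_le (fun n => (x - x^2)/2 - x * h n / 3) _
                          (fun n => (x - x^2)/2 + x^3 * h n / 3)).
  - intro n. specialize (hb n). set (t := h n) in *.
    assert (0 <= x * t) by nra. assert (ht2 : 0 < t^2) by nra.
    pose proof (ln_1p_lower (x * t) ltac:(lra)). pose proof (ln_1p_upper (x * t) ltac:(lra)).
    pose proof (ln_1p_lower t ltac:(lra)). pose proof (ln_1p_upper t ltac:(lra)).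
    assert (x * (t - t^2/2) <= x * ln (1 + t) <= x * (t - t^2/2 + t^3/3))
      by (split; apply Rmult_le_compat_l; lra).
    split; [apply Rle_div_r | apply Rle_div_l]; lra.
  - apply (is_lim_seq_of_eq _ ((x - x^2)/2 - x * 0 / 3)); [|field].
    apply is_lim_seq_minus'; [apply is_lim_seq_const |].
    apply is_lim_seq_div'; [| apply is_lim_seq_const | lra].
    apply is_lim_seq_mult'; [apply is_lim_seq_const | exact hl].
  - apply (is_lim_seq_of_eq _ ((x - x^2)/2 + x^3 * 0 / 3)); [|field].
    apply is_lim_seq_plus'; [apply is_lim_seq_const |].
    apply is_lim_seq_div'; [| apply is_lim_seq_const | lra].
    apply is_lim_seq_mult'; [apply is_lim_seq_const | exact hl].
Qed.

(* [a_(n+1) (x) - x = (ln (1 + x h) - x ln (1 + h)) / ln (1 + h)] with [h = node_step mu n]. *)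
Lemma a_succ_asymptotic mu x : 0 < mu -> 0 <= x <= 1 ->
  is_lim_seq (fun n => INR n * (a_succ mu n x - x)) (x * (1 - x) / (2 * (1 + mu))).
Proof.
  intros hmu hx.
  assert (Hnh : is_lim_seq (fun n => INR n * node_step mu n) (/ (1 + mu))).
  { apply (is_lim_seq_of_eq _ (/ (1 + mu) * 1)); [|ring].
    eapply is_lim_seq_ext; [|exact (is_lim_seq_scal_l _ _ _ is_lim_seq_INR_div_S)].
    intro n. unfold node_step. simpl. field. pose proof (pos_INR n). lra. }
  pose proof (fun n => node_step_bounds mu n hmu) as hb.
  pose proof (is_lim_seq_node_step mu hmu) as hl.
  pose proof (is_lim_seq_div' _ _ _ _ (ln_1p_defect_lim (node_step mu) x hx hb hl)
                (ln_1p_div_lim (node_step mu) hb hl) ltac:(lra)) as Hq.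
  apply (is_lim_seq_of_eq _ (/ (1 + mu) * ((x - x ^ 2) / 2 / 1))); [|field; lra].
  eapply is_lim_seq_ext; [|exact (is_lim_seq_mult' _ _ _ _ Hnh Hq)].
  intro n. rewrite a_succ_node_step. pose proof (node_step_bounds mu n hmu).
  set (h := node_step mu n) in *. pose proof (ln_1p_pos h ltac:(lra)). field. lra.
Qed.

Lemma a_succ_lim mu x : 0 < mu -> 0 <= x <= 1 -> is_lim_seq (fun n => a_succ mu n x) x.
Proof.
  intros hmu hx.
  assert (Hi : is_lim_seq (fun n => / INR n) 0)
    by (apply (is_lim_seq_inv _ p_infty); [apply is_lim_seq_INR | discriminate]).
  pose proof (is_lim_seq_plus' _ _ _ _ (is_lim_seq_const x)
                (is_lim_seq_mult' _ _ _ _ (a_succ_asymptotic mu x hmu hx) Hi)) as H.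
  rewrite Rmult_0_r, Rplus_0_r in H.
  apply (is_lim_seq_ext_loc (fun n => x + INR n * (a_succ mu n x - x) * / INR n)); [|exact H].
  exists 1%nat. intros n hn. pose proof (le_INR 1 n hn). simpl in *. field. lra.
Qed.

(** * The Kantorovich-type operator *)

Definition kantorovich (mu : R) (n : nat) (g : R -> R) (x : R) : R :=
  sum_f_R0 (fun k => pnk n k (a_succ mu n x) * (INR n + 1) *
                     RInt g (INR k / (INR n + 1)) (INR (S k) / (INR n + 1))) n.

Lemma LK_kantorovich mu n f x : LK mu n f x = lnmu mu x * kantorovich mu n (fmu mu f) x.
Proof. reflexivity. Qed.

Lemma cell_bounds n k : (k <= n)%nat ->
  0 <= INR k / (INR n + 1) /\ INR (S k) / (INR n + 1) <= 1 /\
  INR (S k) / (INR n + 1) = INR k / (INR n + 1) + / (INR n + 1).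
Proof.
  intro hk. pose proof (pos_INR n). pose proof (pos_INR k). pose proof (le_INR _ _ hk).
  rewrite S_INR. repeat split.
  - apply Rdiv_le_0_compat; lra.
  - apply Rle_div_l; lra.
  - field. lra.
Qed.

Lemma kantorovich_ext mu n g g' x :
  (forall t, 0 < t < 1 -> g t = g' t) -> kantorovich mu n g x = kantorovich mu n g' x.
Proof.
  intro he. unfold kantorovich. apply sum_eq. intros k hk. f_equal. apply RInt_ext.
  pose proof (cell_bounds n k hk). pose proof (pos_INR n).
  assert (0 < / (INR n + 1)) by (apply Rinv_0_lt_compat; lra).
  rewrite Rmin_left, Rmax_right by lra. intros t ht. apply he. lra.
Qed.

Lemma kantorovich_const mu n c x : kantorovich mu n (fun _ => c) x = c.
Proof.
  transitivity (c * sum_f_R0 (fun k => pnk n k (a_succ mu n x)) n);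
    [| now rewrite pnk_sum1, Rmult_1_r].
  unfold kantorovich. rewrite scal_sum. apply sum_eq. intros k hk. rewrite RInt_const.
  destruct (cell_bounds n k hk) as (_ & _ & ->).
  change (scal ?a ?b) with (a * b). field. pose proof (pos_INR n). lra.
Qed.

Lemma kantorovich_lin mu n g h c x :
  (forall t, continuity_pt g t) -> (forall t, continuity_pt h t) ->
  kantorovich mu n (fun t => g t + c * h t) x = kantorovich mu n g x + c * kantorovich mu n h x.
Proof.
  intros hg hh. unfold kantorovich. rewrite scal_sum, <- plus_sum. apply sum_eq. intros k _.
  set (a := INR k / (INR n + 1)). set (b := INR (S k) / (INR n + 1)).
  assert (RInt (fun t => g t + c * h t) a b = RInt g a b + c * RInt h a b).
  { rewrite <- (RInt_scal (V := R_CompleteNormedModule)) by now apply ex_RInt_continuity_pt.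
    apply (RInt_plus (V := R_CompleteNormedModule));
      [| apply (ex_RInt_scal (V := R_CompleteNormedModule))]; now apply ex_RInt_continuity_pt. }
  rewrite H. ring.
Qed.

Lemma kantorovich_sub_eq mu n h x c :
  kantorovich mu n h x - c = sum_f_R0 (fun k => pnk n k (a_succ mu n x) *
     ((INR n + 1) * RInt h (INR k / (INR n + 1)) (INR (S k) / (INR n + 1)) - c)) n.
Proof.
  replace c with (c * sum_f_R0 (fun k => pnk n k (a_succ mu n x)) n) at 1
    by now rewrite pnk_sum1, Rmult_1_r.
  unfold kantorovich. rewrite scal_sum, <- minus_sum. apply sum_eq. intros. ring.
Qed.

Lemma RInt_shift1 x0 a b : RInt (fun t => t - x0) a b = ((b - x0)^2 - (a - x0)^2) / 2.
Proof.
  apply is_RInt_unique.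
  replace (((b - x0)^2 - (a - x0)^2) / 2) with ((b - x0)^2 / 2 - (a - x0)^2 / 2) by field.
  apply (is_RInt_derive (V := R_CompleteNormedModule) (fun t => (t - x0)^2 / 2)).
  - intros t _. auto_derive; auto; field.
  - intros t _. apply continuity_pt_filterlim, (is_derive_continuity_pt _ _ 1).
    auto_derive; auto; ring.
Qed.

Lemma RInt_shift2 x0 a b : RInt (fun t => (t - x0)^2) a b = ((b - x0)^3 - (a - x0)^3) / 3.
Proof.
  apply is_RInt_unique.
  replace (((b - x0)^3 - (a - x0)^3) / 3) with ((b - x0)^3 / 3 - (a - x0)^3 / 3) by field.
  apply (is_RInt_derive (V := R_CompleteNormedModule) (fun t => (t - x0)^3 / 3)).
  - intros t _. auto_derive; auto; field.
  - intros t _. apply continuity_pt_filterlim, (is_derive_continuity_pt _ _ (2 * (t - x0))).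
    auto_derive; auto; ring.
Qed.

Lemma kantorovich_moment1 mu n x0 x :
  kantorovich mu n (fun t => t - x0) x
  = (2 * (INR n * a_succ mu n x - (INR n + 1) * x0) + 1) / (2 * (INR n + 1)).
Proof.
  unfold kantorovich. pose proof (pos_INR n). set (N := INR n + 1). set (y := a_succ mu n x).
  transitivity
    (sum_f_R0 (fun k => pnk n k y * ((1 / (2 * N) - x0) + / N * INR k + 0 * INR k ^ 2)) n).
  - apply sum_eq. intros k _. rewrite RInt_shift1, S_INR. unfold N. field. lra.
  - rewrite pnk_quadratic. unfold N. field. lra.
Qed.

Lemma kantorovich_moment2 mu n x0 x :
  kantorovich mu n (fun t => (t - x0)^2) x
  = let u := INR n * a_succ mu n x - (INR n + 1) * x0 in
    (u^2 + u + 1/3 + INR n * a_succ mu n x * (1 - a_succ mu n x)) / (INR n + 1)^2.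
Proof.
  unfold kantorovich. pose proof (pos_INR n). cbv zeta.
  set (N := INR n + 1). set (y := a_succ mu n x).
  transitivity (sum_f_R0 (fun k => pnk n k y *
    ((1/3 - N * x0 + N^2 * x0^2) / N^2 + (1 - 2 * N * x0) / N^2 * INR k + / N^2 * INR k ^ 2)) n).
  - apply sum_eq. intros k _. rewrite RInt_shift2, S_INR. unfold N. field. lra.
  - rewrite pnk_quadratic. unfold N. field. lra.
Qed.

(** * Voronovskaya's formula for quadratics *)

Definition quad (x0 q0 q1 q2 t : R) : R := q0 + q1 * (t - x0) + q2 * (t - x0)^2.

Definition ode_op (mu x d1 d2 : R) : R := Acoef mu x * d1 + Bcoef x * d2.

Lemma quad_continuity_pt x0 q0 q1 q2 t : continuity_pt (quad x0 q0 q1 q2) t.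
Proof.
  apply (is_derive_continuity_pt _ _ (q1 + 2 * q2 * (t - x0))).
  unfold quad. auto_derive; auto; ring.
Qed.

Lemma kantorovich_quad mu n x0 q0 q1 q2 x :
  kantorovich mu n (quad x0 q0 q1 q2) x
  = q0 + q1 * kantorovich mu n (fun t => t - x0) x + q2 * kantorovich mu n (fun t => (t - x0)^2) x.
Proof.
  assert (hc1 : forall t, continuity_pt (fun t => q0 + q1 * (t - x0)) t).
  { intro t. apply (is_derive_continuity_pt _ _ q1). auto_derive; auto; ring. }
  assert (hc2 : forall t, continuity_pt (fun t => (t - x0)^2) t).
  { intro t. apply (is_derive_continuity_pt _ _ (2 * (t - x0))). auto_derive; auto; ring. }
  unfold quad. rewrite kantorovich_lin by auto.
  rewrite (kantorovich_lin mu n (fun _ => q0));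
    [| intro; apply continuity_pt_const; now intros ? ? |].
  - now rewrite kantorovich_const.
  - intro t. apply (is_derive_continuity_pt _ _ 1). auto_derive; auto; ring.
Qed.

Lemma kantorovich_moment1_lim mu x : 0 < mu -> 0 <= x <= 1 ->
  is_lim_seq (fun n => INR n * kantorovich mu n (fun t => t - x) x) (Acoef mu x).
Proof.
  intros hmu hx.
  set (e := x * (1 - x) / (2 * (1 + mu))).
  apply (is_lim_seq_ext
    (fun n => INR n / (INR n + 1) * (2 * (INR n * (a_succ mu n x - x)) + 1 - 2 * x) / 2)).
  { intro n. rewrite kantorovich_moment1. field. pose proof (pos_INR n). lra. }
  apply (is_lim_seq_of_eq _ (1 * (2 * e + 1 - 2 * x) / 2)).
  2:{ unfold Acoef, e. field. lra. }
  apply is_lim_seq_div'; [| apply is_lim_seq_const | lra].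
  apply is_lim_seq_mult'; [apply is_lim_seq_INR_div_S |].
  apply is_lim_seq_minus'; [| apply is_lim_seq_const].
  apply is_lim_seq_plus'; [| apply is_lim_seq_const].
  apply is_lim_seq_mult'; [apply is_lim_seq_const | now apply a_succ_asymptotic].
Qed.

Lemma kantorovich_moment2_lim mu x : 0 < mu -> 0 <= x <= 1 ->
  is_lim_seq (fun n => INR n * kantorovich mu n (fun t => (t - x)^2) x) (2 * Bcoef x).
Proof.
  intros hmu hx.
  set (r := fun n => INR n / (INR n + 1)).
  set (v := fun n => INR n * (a_succ mu n x - x) - x).
  apply (is_lim_seq_ext (fun n => r n * / (INR n + 1) * (v n * v n + v n + 1/3)
                                   + r n * r n * (a_succ mu n x * (1 - a_succ mu n x)))).
  { intro n. rewrite kantorovich_moment2. unfold r, v. cbv zeta.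
    field. pose proof (pos_INR n). lra. }
  assert (Hr : is_lim_seq r 1) by apply is_lim_seq_INR_div_S.
  set (l := x * (1 - x) / (2 * (1 + mu)) - x).
  assert (Hv : is_lim_seq v l).
  { apply is_lim_seq_minus'; [now apply a_succ_asymptotic | apply is_lim_seq_const]. }
  pose proof (a_succ_lim mu x hmu hx) as Ha.
  assert (H1 : is_lim_seq (fun n => r n * / (INR n + 1) * (v n * v n + v n + 1/3)) 0).
  { apply (is_lim_seq_of_eq _ (1 * 0 * (l * l + l + 1/3))); [| ring].
    apply is_lim_seq_mult'; [apply is_lim_seq_mult'; [exact Hr | exact is_lim_seq_inv_INR_S] |].
    apply is_lim_seq_plus'; [| apply is_lim_seq_const].
    apply is_lim_seq_plus'; [apply is_lim_seq_mult' |]; exact Hv. }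
  assert (H2 : is_lim_seq (fun n => r n * r n * (a_succ mu n x * (1 - a_succ mu n x)))
                          (x * (1 - x))).
  { apply (is_lim_seq_of_eq _ (1 * 1 * (x * (1 - x)))); [| ring].
    apply is_lim_seq_mult'; [apply is_lim_seq_mult'; exact Hr |].
    apply is_lim_seq_mult'; [exact Ha |].
    apply is_lim_seq_minus'; [apply is_lim_seq_const | exact Ha]. }
  apply (is_lim_seq_of_eq _ (0 + x * (1 - x))); [now apply is_lim_seq_plus' | unfold Bcoef; field].
Qed.

Lemma quad_voronovskaya mu x0 q0 q1 q2 : 0 < mu -> 0 <= x0 <= 1 ->
  is_lim_seq (fun n => INR n * (kantorovich mu n (quad x0 q0 q1 q2) x0 - quad x0 q0 q1 q2 x0))
    (ode_op mu x0 q1 (2 * q2)).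
Proof.
  intros hmu hx.
  apply (is_lim_seq_ext (fun n => q1 * (INR n * kantorovich mu n (fun t => t - x0) x0)
                                   + q2 * (INR n * kantorovich mu n (fun t => (t - x0)^2) x0))).
  { intro n. rewrite kantorovich_quad. unfold quad. ring. }
  apply (is_lim_seq_of_eq _ (q1 * Acoef mu x0 + q2 * (2 * Bcoef x0))); [| unfold ode_op; ring].
  apply is_lim_seq_plus'; apply is_lim_seq_mult'; try apply is_lim_seq_const.
  - now apply kantorovich_moment1_lim.
  - now apply kantorovich_moment2_lim.
Qed.

(** * Localisation and the viscosity inequality *)

Lemma cell_near n k y x0 d t : 0 <= y <= 1 ->
  Rabs (INR k - INR n * y) < INR n * (d/4) -> Rabs (y - x0) < d/4 -> / (INR n + 1) < d/8 ->
  INR k / (INR n + 1) <= t <= INR (S k) / (INR n + 1) -> Rabs (t - x0) < d.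
Proof.
  intros hy hk hyx hN ht. rewrite S_INR in ht. pose proof (pos_INR n).
  set (N := INR n + 1) in *. assert (hN0 : 0 < N) by (unfold N; lra).
  assert (htN : INR k <= t * N <= INR k + 1).
  { split; [apply Rle_div_l | apply Rle_div_r]; lra. }
  assert (hdN : 1 < N * (d/8)).
  { apply (Rmult_lt_compat_l N) in hN; [| lra]. rewrite Rinv_r in hN; lra. }
  apply Rabs_lt_between in hk. apply Rabs_lt_between in hyx. apply Rabs_lt_between.
  assert (hd : 0 < d) by nra.
  assert (INR n * (d/4) <= N * (d/4)) by (unfold N; nra).
  assert (- (d/4) * N < (y - x0) * N < d/4 * N) by (split; apply Rmult_lt_compat_r; lra).
  assert (y * N = INR n * y + y) by (unfold N; ring).
  assert (- (N * d) < (t - x0) * N < N * d) by lra.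
  split; nra.
Qed.

Section Localisation.

Variables (mu : R) (h : R -> R) (x0 d M : R).
Hypotheses (hmu : 0 < mu) (hx0 : 0 <= x0 <= 1) (hc : forall t, continuity_pt h t)
  (hd : 0 < d <= 1) (hM : 0 <= M) (hb : forall t, 0 <= t <= 1 -> Rabs (h t) <= M)
  (hmax : forall t, 0 <= t <= 1 -> Rabs (t - x0) < d -> h t <= h x0).

(* A cell close to [n a_(n+1)(x0)] lies in the neighbourhood where [h <= h x0];
   a far cell is paid for by the exponential weights of the Chernoff bound. *)
Lemma kantorovich_cell_le n k : (k <= n)%nat ->
  Rabs (a_succ mu n x0 - x0) < d/4 -> / (INR n + 1) < d/8 ->
  (INR n + 1) * RInt h (INR k / (INR n + 1)) (INR (S k) / (INR n + 1)) - h x0 <=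
  2 * M * (exp (d/16 * (INR k - INR n * a_succ mu n x0 - INR n * (d/4)))
         + exp (d/16 * (INR n * a_succ mu n x0 - INR k - INR n * (d/4)))).
Proof.
  intros hk hy hN. destruct (cell_bounds n k hk) as (h1 & h2 & h3).
  pose proof (a_succ_bounds mu n x0 hmu hx0) as hyr.
  set (y := a_succ mu n x0) in *. set (N := INR n + 1) in *.
  assert (hN0 : 0 < N) by (pose proof (pos_INR n); unfold N; lra).
  assert (hNi : 0 < / N) by (apply Rinv_0_lt_compat; lra).
  set (e1 := exp (d/16 * (INR k - INR n * y - INR n * (d/4)))).
  set (e2 := exp (d/16 * (INR n * y - INR k - INR n * (d/4)))).
  assert (0 < e1 /\ 0 < e2) as [] by (split; apply exp_pos).
  destruct (Rlt_dec (Rabs (INR k - INR n * y)) (INR n * (d/4))) as [hnear | hfar].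
  - assert (RInt h (INR k / N) (INR (S k) / N) <= / N * h x0).
    { replace (/ N * h x0) with ((INR (S k) / N - INR k / N) * h x0) by (rewrite h3; ring).
      apply RInt_le_const; auto; [lra |]. intros t ht. apply hmax; [lra |].
      apply (cell_near n k y); unfold N in *; auto. rewrite S_INR. lra. }
    assert (N * RInt h (INR k / N) (INR (S k) / N) <= h x0).
    { replace (h x0) with (N * (/ N * h x0)) by (field; lra). apply Rmult_le_compat_l; lra. }
    nra.
  - assert (RInt h (INR k / N) (INR (S k) / N) <= / N * M).
    { replace (/ N * M) with ((INR (S k) / N - INR k / N) * M) by (rewrite h3; ring).
      apply RInt_le_const; auto; [lra |]. intros t ht.
      specialize (hb t ltac:(lra)). apply Rabs_le_between in hb. lra. }
    assert (N * RInt h (INR k / N) (INR (S k) / N) <= M).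
    { replace M with (N * (/ N * M)) by (field; lra). apply Rmult_le_compat_l; lra. }
    assert (- h x0 <= M) by (specialize (hb x0 hx0); apply Rabs_le_between in hb; lra).
    assert (1 <= e1 + e2).
    { apply Rnot_lt_le in hfar. destruct (Rle_dec 0 (INR k - INR n * y)).
      - rewrite Rabs_right in hfar by lra.
        enough (1 <= e1) by lra. unfold e1. rewrite <- exp_0.
        apply exp_le_compat, Rmult_le_pos; lra.
      - rewrite Rabs_left in hfar by lra.
        enough (1 <= e2) by lra. unfold e2. rewrite <- exp_0.
        apply exp_le_compat, Rmult_le_pos; lra. }
    nra.
Qed.

Lemma kantorovich_local_max_le n :
  Rabs (a_succ mu n x0 - x0) < d/4 -> / (INR n + 1) < d/8 ->
  kantorovich mu n h x0 - h x0 <= 4 * M * exp (- (d^2/128 * INR n)).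
Proof.
  intros hy hN. rewrite kantorovich_sub_eq.
  pose proof (a_succ_bounds mu n x0 hmu hx0) as hyr.
  eapply Rle_trans.
  { apply sum_Rle. intros k hk. apply Rmult_le_compat_l; [now apply pnk_ge0 |].
    now apply kantorovich_cell_le. }
  rewrite (sum_eq _ (fun k => pnk n k (a_succ mu n x0) *
     (exp (d/16 * (INR k - INR n * a_succ mu n x0 - INR n * (d/4)))
      + exp (d/16 * (INR n * a_succ mu n x0 - INR k - INR n * (d/4)))) * (2 * M)))
    by (intros; ring).
  rewrite <- scal_sum.
  pose proof (pnk_tail_le n (a_succ mu n x0) (d/16) (d/4) hyr ltac:(lra)) as ht.
  replace (INR n * (2 * (d/16)^2 - d/16 * (d/4))) with (- (d^2/128 * INR n)) in ht by field.
  nra.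
Qed.

Lemma kantorovich_local_max_lim_le (l : R) :
  is_lim_seq (fun n => INR n * (kantorovich mu n h x0 - h x0)) l -> l <= 0.
Proof.
  intro hl.
  pose proof (a_succ_lim mu x0 hmu hx0) as Ha. apply is_lim_seq_Reals in Ha.
  destruct (Ha (d/4) ltac:(lra)) as [N1 HN1].
  pose proof is_lim_seq_inv_INR_S as Hi. apply is_lim_seq_Reals in Hi.
  destruct (Hi (d/8) ltac:(lra)) as [N2 HN2].
  assert (Hev : eventually (fun n => INR n * (kantorovich mu n h x0 - h x0)
                                     <= 4 * M * (INR n * exp (- (d^2/128 * INR n))))).
  { exists (Nat.max N1 N2). intros n hn. pose proof (pos_INR n).
    assert (kantorovich mu n h x0 - h x0 <= 4 * M * exp (- (d^2/128 * INR n))).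
    { apply kantorovich_local_max_le; [apply HN1; lia |].
      specialize (HN2 n ltac:(lia)). unfold R_dist in HN2.
      rewrite Rminus_0_r, Rabs_right in HN2; [lra |].
      left. apply Rinv_0_lt_compat. lra. }
    nra. }
  pose proof (is_lim_seq_mult' _ _ _ _ (is_lim_seq_const (4 * M))
                (is_lim_seq_INR_exp_neg (d^2/128) ltac:(nra))) as H0.
  pose proof (is_lim_seq_le_loc _ _ _ _ Hev hl H0) as Hle. simpl in Hle. lra.
Qed.

End Localisation.

(* Viscosity subsolution of [A u' + B u'' = 0] at [x0], tested with the quadratics
   [Q] touching [u] from above at [x0] ([Q' = q1] and [Q'' = 2 q2] there). *)
Definition visc_sub (mu : R) (u : R -> R) (x0 : R) : Prop :=
  forall q0 q1 q2 d, 0 < d ->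
    (forall t, 0 <= t <= 1 -> Rabs (t - x0) < d ->
       u t - quad x0 q0 q1 q2 t <= u x0 - quad x0 q0 q1 q2 x0) ->
    0 <= ode_op mu x0 q1 (2 * q2).

Lemma visc_sub_of_voronovskaya mu g x0 : 0 < mu -> 0 <= x0 <= 1 ->
  (forall t, continuity_pt g t) ->
  is_lim_seq (fun n => INR n * (kantorovich mu n g x0 - g x0)) 0 -> visc_sub mu g x0.
Proof.
  intros hmu hx hg hlim q0 q1 q2 d hd hmax.
  set (h := fun t => g t + -1 * quad x0 q0 q1 q2 t).
  assert (hc : forall t, continuity_pt h t).
  { intro t. apply continuity_pt_plus; [apply hg |].
    apply continuity_pt_scal, quad_continuity_pt. }
  destruct (continuity_pt_bounded01 h hc) as [M [hM hb]].
  assert (HL : is_lim_seq (fun n => INR n * (kantorovich mu n h x0 - h x0))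
                 (0 + -1 * ode_op mu x0 q1 (2 * q2))).
  { apply (is_lim_seq_ext (fun n => INR n * (kantorovich mu n g x0 - g x0)
       + -1 * (INR n * (kantorovich mu n (quad x0 q0 q1 q2) x0 - quad x0 q0 q1 q2 x0)))).
    - intro n. unfold h. rewrite kantorovich_lin; auto using quad_continuity_pt. ring.
    - apply is_lim_seq_plus'; [exact hlim |].
      apply is_lim_seq_mult'; [apply is_lim_seq_const | now apply quad_voronovskaya]. }
  enough (0 + -1 * ode_op mu x0 q1 (2 * q2) <= 0) by lra.
  apply (kantorovich_local_max_lim_le mu h x0 (Rmin d 1) M); auto.
  - split; [apply Rmin_pos; lra | apply Rmin_r].
  - intros t ht htx. unfold h. pose proof (Rmin_l d 1). specialize (hmax t ht ltac:(lra)). lra.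
Qed.

(** * Solutions of the differential equation *)

(* [s] solves the first-order equation [A s + B s' = 0]; hence the solutions of
   [A F' + B F'' = 0] are [c1 + c2 S] with [S' = s]. *)
Definition sfun (mu x : R) : R := exp (- (x / (1 + mu))) / (x * (1 - x)).

Definition dsfun (mu x : R) : R :=
  exp (- (x / (1 + mu))) * (- / (1 + mu) / (x * (1 - x)) - (1 - 2 * x) / (x * (1 - x))^2).

Definition Sfun (mu x : R) : R := RInt (sfun mu) (1/2) x.

Lemma sfun_derive mu x : 0 < mu -> 0 < x < 1 -> is_derive (sfun mu) x (dsfun mu x).
Proof.
  intros hmu hx. unfold sfun, dsfun. auto_derive.
  - repeat split; try lra; apply Rmult_integral_contrapositive; split; lra.
  - unfold Rdiv. field. split; lra.
Qed.

Lemma sfun_ode mu x : 0 < mu -> 0 < x < 1 -> ode_op mu x (sfun mu x) (dsfun mu x) = 0.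
Proof. intros hmu hx. unfold ode_op, Acoef, Bcoef, sfun, dsfun. field. split; lra. Qed.

Lemma sfun_pos mu x : 0 < x < 1 -> 0 < sfun mu x.
Proof. intro hx. unfold sfun. apply Rdiv_lt_0_compat; [apply exp_pos | nra]. Qed.

Lemma sfun_ex_RInt mu a b : 0 < mu -> 0 < a < 1 -> 0 < b < 1 -> ex_RInt (sfun mu) a b.
Proof.
  intros hmu ha hb. apply (ex_RInt_continuous (V := R_CompleteNormedModule)). intros z hz.
  apply continuity_pt_filterlim, (is_derive_continuity_pt _ _ (dsfun mu z)), sfun_derive; auto.
  split; [eapply Rlt_le_trans; [|apply hz] | eapply Rle_lt_trans; [apply hz|]];
    [apply Rmin_case | apply Rmax_case]; lra.
Qed.

Lemma Sfun_derive mu x : 0 < mu -> 0 < x < 1 -> is_derive (Sfun mu) x (sfun mu x).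
Proof.
  intros hmu hx. unfold Sfun.
  apply (is_derive_RInt (V := R_CompleteNormedModule) (sfun mu) (RInt (sfun mu) (1/2)) (1/2)).
  - apply (locally_interval x 0 1); auto. intros t ht.
    apply (RInt_correct (V := R_CompleteNormedModule)), sfun_ex_RInt; auto; lra.
  - apply continuity_pt_filterlim, (is_derive_continuity_pt _ _ (dsfun mu x)), sfun_derive; auto.
Qed.

Lemma Sfun_lt mu a b : 0 < mu -> 0 < a -> a < b -> b < 1 -> Sfun mu a < Sfun mu b.
Proof.
  intros hmu ha hab hb.
  destruct (MVT_gen (Sfun mu) a b (sfun mu)) as [c [hc he]];
    rewrite Rmin_left, Rmax_right in * by lra.
  - intros x hx. apply Sfun_derive; auto; lra.
  - intros x hx. apply (is_derive_continuity_pt _ _ (sfun mu x)), Sfun_derive; auto; lra.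
  - pose proof (sfun_pos mu c ltac:(lra)). nra.
Qed.

(* On [(0, 1/2]], [s(r) >= exp (-1) / r], so [S] diverges like [ln] at [0]. *)
Lemma Sfun_log_lower mu t : 0 < mu -> 0 < t <= 1/2 ->
  exp (-1) * (ln (1/2) - ln t) <= - Sfun mu t.
Proof.
  intros hmu ht.
  assert (hS : - Sfun mu t = RInt (sfun mu) t (1/2)).
  { unfold Sfun.
    rewrite <- (opp_RInt_swap (V := R_CompleteNormedModule)) by (apply sfun_ex_RInt; lra).
    apply Ropp_involutive. }
  assert (hI : is_RInt (fun r => exp (-1) * / r) t (1/2) (exp (-1) * ln (1/2) - exp (-1) * ln t)).
  { apply (is_RInt_derive (V := R_CompleteNormedModule) (fun r => exp (-1) * ln r));
      intros x hx; rewrite Rmin_left, Rmax_right in hx by lra.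
    - auto_derive; [lra | field; lra].
    - apply continuity_pt_filterlim, (is_derive_continuity_pt _ _ (exp (-1) * (- / x^2))).
      auto_derive; [lra | field; lra]. }
  rewrite hS, Rmult_minus_distr_l, <- (is_RInt_unique _ _ _ _ hI).
  apply RInt_le; [lra | eexists; exact hI | apply sfun_ex_RInt; lra |].
  intros r hr. unfold sfun.
  assert (exp (-1) <= exp (- (r / (1 + mu)))).
  { apply exp_le_compat. assert (r / (1 + mu) <= 1) by (apply Rle_div_l; lra). lra. }
  assert (0 < exp (- (r / (1 + mu)))) by apply exp_pos.
  apply (Rle_div_r _ _ (r * (1 - r))); [nra |].
  replace (exp (-1) * / r * (r * (1 - r))) with (exp (-1) * (1 - r)) by (field; lra). nra.
Qed.

Lemma Sfun_unbounded mu L : 0 < mu -> exists t, 0 < t < 1 /\ L <= Rabs (Sfun mu t).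
Proof.
  intro hmu.
  set (t := / 2 * exp (- (exp 1 * Rabs L))).
  assert (hel : exp (- (exp 1 * Rabs L)) <= 1).
  { rewrite <- exp_0 at 2. apply exp_le_compat.
    pose proof (exp_pos 1). pose proof (Rabs_pos L). nra. }
  pose proof (exp_pos (- (exp 1 * Rabs L))).
  exists t. split; [unfold t; lra |].
  pose proof (Sfun_log_lower mu t hmu ltac:(unfold t; lra)) as hS.
  replace (ln (1/2) - ln t) with (exp 1 * Rabs L) in hS.
  2:{ unfold t. rewrite ln_mult, ln_exp by lra. replace (/ 2) with (1/2) by field. ring. }
  replace (exp (-1) * (exp 1 * Rabs L)) with (Rabs L) in hS
    by (rewrite <- Rmult_assoc, <- exp_plus; replace (-1 + 1) with 0 by ring; rewrite exp_0; ring).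
  pose proof (Rle_abs L). pose proof (Rle_abs (- Sfun mu t)). rewrite Rabs_Ropp in *. lra.
Qed.

Lemma repr_bounded_const mu g c1 c2 M : 0 < mu ->
  (forall t, 0 < t < 1 -> Rabs (g t) <= M) ->
  (forall t, 0 < t < 1 -> g t = c1 + c2 * Sfun mu t) -> c2 = 0.
Proof.
  intros hmu hb hr.
  destruct (Req_dec c2 0) as [e|e]; auto. exfalso.
  assert (hc2 : 0 < Rabs c2) by now apply Rabs_pos_lt.
  destruct (Sfun_unbounded mu ((M + Rabs c1 + 1) / Rabs c2) hmu) as [t [ht hS]].
  assert (M + Rabs c1 + 1 <= Rabs (c2 * Sfun mu t)).
  { rewrite Rabs_mult. apply Rle_div_l in hS; lra. }
  pose proof (hb t ht) as hg. rewrite hr in hg by exact ht.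
  pose proof (Rabs_triang (c1 + c2 * Sfun mu t) (- c1)) as htr.
  rewrite Rabs_Ropp in htr.
  replace (c1 + c2 * Sfun mu t + - c1) with (c2 * Sfun mu t) in htr by ring.
  lra.
Qed.

Lemma ode_solution_repr mu (F d1 d2 : R -> R) : 0 < mu ->
  (forall x, 0 < x < 1 -> is_derive F x (d1 x) /\ is_derive d1 x (d2 x) /\
                          ode_op mu x (d1 x) (d2 x) = 0) ->
  exists c1 c2, forall x, 0 < x < 1 -> F x = c1 + c2 * Sfun mu x.
Proof.
  intros hmu H.
  assert (hW : forall x, 0 < x < 1 -> is_derive (fun t => d1 t / sfun mu t) x 0).
  { intros x hx. destruct (H x hx) as (_ & hd2 & hode).
    pose proof (sfun_derive mu x hmu hx) as hs. pose proof (sfun_pos mu x hx).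
    pose proof (sfun_ode mu x hmu hx) as hso. unfold ode_op, Bcoef in hode, hso.
    apply (is_derive_ext (fun t => d1 t * / sfun mu t)); [reflexivity |].
    replace 0 with (d2 x * / sfun mu x + d1 x * (- dsfun mu x / (sfun mu x)^2)).
    - apply (is_derive_mult d1 (fun t => / sfun mu t)); [exact hd2 | | intros; apply Rmult_comm].
      apply (is_derive_inv (sfun mu)); [exact hs | lra].
    - assert (hw : d2 x * sfun mu x - d1 x * dsfun mu x = 0).
      { apply (Rmult_eq_reg_l ((x - x^2) / 2)); [| nra].
        transitivity (sfun mu x * (Acoef mu x * d1 x + (x - x^2) / 2 * d2 x)
                      - d1 x * (Acoef mu x * sfun mu x + (x - x^2) / 2 * dsfun mu x));
          [ring | rewrite hode, hso; ring]. }
      replace (d2 x * / sfun mu x + d1 x * (- dsfun mu x / sfun mu x ^ 2))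
        with ((d2 x * sfun mu x - d1 x * dsfun mu x) / sfun mu x ^ 2) by (field; lra).
      rewrite hw. unfold Rdiv. ring. }
  set (C := d1 (1/2) / sfun mu (1/2)).
  assert (hd1 : forall x, 0 < x < 1 -> d1 x = C * sfun mu x).
  { intros x hx. pose proof (is_derive_0_const _ 0 1 hW x (1/2) hx ltac:(lra)) as e.
    cbv beta in e. fold C in e. pose proof (sfun_pos mu x hx). rewrite <- e. field. lra. }
  assert (hF : forall x, 0 < x < 1 -> is_derive (fun t => F t - C * Sfun mu t) x 0).
  { intros x hx. destruct (H x hx) as [hd _].
    replace 0 with (d1 x - C * sfun mu x) by (rewrite hd1 by exact hx; ring).
    apply (is_derive_minus F); [exact hd |].
    apply (is_derive_scal (Sfun mu)), Sfun_derive; auto. }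
  exists (F (1/2) - C * Sfun mu (1/2)), C. intros x hx.
  pose proof (is_derive_0_const _ 0 1 hF x (1/2) hx ltac:(lra)) as e. cbv beta in e. lra.
Qed.

(** * Comparison principle *)

(* The quadratic Taylor polynomial of [phi], raised by [eta (t - x0)^2] with
   [eta = - ode_op / (4 B)], touches [u] from above at [x0]. *)
Lemma visc_sub_not_touched mu u phi phi1 phi2 x0 r :
  visc_sub mu u x0 -> 0 < x0 < 1 -> 0 < r ->
  (forall t, Rabs (t - x0) < r -> is_derive phi t (phi1 t)) -> is_derive phi1 x0 phi2 ->
  ode_op mu x0 (phi1 x0) phi2 < 0 ->
  ~ (forall t, 0 <= t <= 1 -> Rabs (t - x0) < r -> u t - phi t <= u x0 - phi x0).
Proof.
  intros hvisc hx hr hd1 hd2 hneg hmax.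
  assert (hB : 0 < Bcoef x0) by (unfold Bcoef; nra).
  set (eta := - ode_op mu x0 (phi1 x0) phi2 / (4 * Bcoef x0)).
  assert (heta : 0 < eta) by (unfold eta; apply Rdiv_lt_0_compat; lra).
  destruct (taylor2_upper phi phi1 x0 phi2 r eta hr heta hd1 hd2) as [d [hd hT]].
  assert (ode_op mu x0 (phi1 x0) (2 * (phi2 / 2 + eta)) = ode_op mu x0 (phi1 x0) phi2 / 2)
    by (unfold eta, ode_op; field; lra).
  enough (0 <= ode_op mu x0 (phi1 x0) (2 * (phi2 / 2 + eta))) by lra.
  apply (hvisc (phi x0) (phi1 x0) (phi2 / 2 + eta) (Rmin d r)); [apply Rmin_pos; lra |].
  intros t ht htx. pose proof (Rmin_l d r). pose proof (Rmin_r d r).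
  specialize (hT t ltac:(lra)). specialize (hmax t ht ltac:(lra)).
  unfold quad. replace (x0 - x0) with 0 by ring. lra.
Qed.

Lemma is_derive_barrier (F : R -> R) dF c1 c2 e K t : is_derive F t dF ->
  is_derive (fun t => c1 + c2 * F t - e * exp (K * t)) t (c2 * dF - e * K * exp (K * t)).
Proof.
  intro hF. auto_derive; [now exists dF |].
  replace (Derive (fun x => F x) t) with dF by (symmetry; now apply is_derive_unique). ring.
Qed.

Lemma barrier_ode_op_neg mu c2 e K x : 0 < mu -> 0 < x < 1 -> 0 < e -> 1 <= K * Bcoef x ->
  ode_op mu x (c2 * sfun mu x - e * K * exp (K * x))
              (c2 * dsfun mu x - e * K * K * exp (K * x)) < 0.
Proof.
  intros hmu hx he hKB. pose proof (sfun_ode mu x hmu hx) as hs.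
  assert (hB : 0 < Bcoef x) by (unfold Bcoef; nra).
  assert (hK : 0 < K) by nra.
  assert (hA : - (1/2) <= Acoef mu x).
  { unfold Acoef. assert (0 <= (x - x^2) / (2 * (1 + mu))) by (apply Rdiv_le_0_compat; nra). lra. }
  replace (ode_op mu x _ _)
    with (c2 * ode_op mu x (sfun mu x) (dsfun mu x)
          - e * K * exp (K * x) * (Acoef mu x + K * Bcoef x))
    by (unfold ode_op; ring).
  rewrite hs. pose proof (exp_pos (K * x)).
  assert (0 < e * K * exp (K * x)) by (repeat apply Rmult_lt_0_compat; lra).
  nra.
Qed.

Lemma visc_sub_le_solution mu u a b c1 c2 :
  0 < mu -> 0 < a -> a < b -> b < 1 -> (forall t, continuity_pt u t) ->
  (forall x0, a < x0 < b -> visc_sub mu u x0) ->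
  u a <= c1 + c2 * Sfun mu a -> u b <= c1 + c2 * Sfun mu b ->
  forall x, a <= x <= b -> u x <= c1 + c2 * Sfun mu x.
Proof.
  intros hmu ha hab hb hu hvisc hua hub x hx.
  apply Rnot_lt_le. intro hgap.
  set (gap := u x - (c1 + c2 * Sfun mu x)).
  set (K := 2 / (a * (1 - b))).
  set (e := gap / (2 * exp K)).
  assert (he : 0 < e)
    by (unfold e, gap; apply Rdiv_lt_0_compat; [lra | pose proof (exp_pos K); lra]).
  assert (hK : 0 < K) by (unfold K; apply Rdiv_lt_0_compat; nra).
  assert (heK : forall t, t <= 1 -> e * exp (K * t) <= gap / 2).
  { intros t ht. apply (Rle_trans _ (e * exp K)).
    - apply Rmult_le_compat_l; [lra |]. apply exp_le_compat. nra.
    - right. unfold e. field. apply Rgt_not_eq, exp_pos. }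
  set (phi := fun t => c1 + c2 * Sfun mu t - e * exp (K * t)).
  set (phi1 := fun t => c2 * sfun mu t - e * K * exp (K * t)).
  assert (hgx : 0 < e * exp (K * x)) by (apply Rmult_lt_0_compat; [lra | apply exp_pos]).
  assert (hcont : forall t, a <= t <= b -> continuity_pt (fun t => u t - phi t) t).
  { intros t ht. apply continuity_pt_minus; [apply hu |].
    apply (is_derive_continuity_pt _ _ (phi1 t)), is_derive_barrier, Sfun_derive; lra. }
  destruct (continuity_ab_interior_max (fun t => u t - phi t) a b x hcont hx) as [x0 [hx0 hmax]];
    [pose proof (heK a ltac:(lra)) | pose proof (heK b ltac:(lra)) |];
    [unfold phi, gap in *; lra .. |].
  set (r := Rmin (x0 - a) (b - x0)).
  assert (hr : 0 < r /\ r <= x0 - a /\ r <= b - x0)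
    by (unfold r; repeat split; [apply Rmin_pos; lra | apply Rmin_l | apply Rmin_r]).
  apply (visc_sub_not_touched mu u phi phi1 (c2 * dsfun mu x0 - e * K * K * exp (K * x0)) x0 r);
    [apply hvisc | lra | lra | | | |]; try lra.
  - intros t ht. apply Rabs_lt_between' in ht. apply is_derive_barrier, Sfun_derive; lra.
  - apply (is_derive_ext (fun t => 0 + c2 * sfun mu t - (e * K) * exp (K * t)));
      [intro; unfold phi1; now rewrite Rplus_0_l |].
    apply is_derive_barrier, sfun_derive; lra.
  - apply barrier_ode_op_neg; try lra.
    assert (a * (1 - b) <= x0 * (1 - x0)) by nra.
    replace (K * Bcoef x0) with (x0 * (1 - x0) / (a * (1 - b)))
      by (unfold K, Bcoef; field; split; lra).
    apply Rle_div_r; nra.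
  - intros t ht htx. apply Rabs_lt_between' in htx. apply hmax. lra.
Qed.

Section ViscositySolution.

Variables (mu : R) (u : R -> R).
Hypotheses (hmu : 0 < mu) (hu : forall t, continuity_pt u t)
  (hvisc : forall x0, 0 < x0 < 1 -> visc_sub mu u x0 /\ visc_sub mu (fun t => - u t) x0).

Lemma visc_solution_repr_on a b : 0 < a -> a < b -> b < 1 ->
  exists c1 c2, forall x, a <= x <= b -> u x = c1 + c2 * Sfun mu x.
Proof.
  intros ha hab hb. pose proof (Sfun_lt mu a b hmu ha hab hb).
  set (c2 := (u b - u a) / (Sfun mu b - Sfun mu a)).
  set (c1 := u a - c2 * Sfun mu a).
  assert (hua : u a = c1 + c2 * Sfun mu a) by (unfold c1; ring).
  assert (hub : u b = c1 + c2 * Sfun mu b) by (unfold c1, c2; field; lra).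
  exists c1, c2. intros x hx. apply Rle_antisym.
  - apply (visc_sub_le_solution mu u a b); auto; try lra.
    intros x0 hx0. apply hvisc. lra.
  - enough (- u x <= - c1 + - c2 * Sfun mu x) by lra.
    apply (visc_sub_le_solution mu (fun t => - u t) a b); auto; try lra.
    + intro t. now apply continuity_pt_opp.
    + intros x0 hx0. apply hvisc. lra.
Qed.

Lemma visc_solution_repr : exists c1 c2, forall x, 0 < x < 1 -> u x = c1 + c2 * Sfun mu x.
Proof.
  destruct (visc_solution_repr_on (1/4) (3/4)) as [c1 [c2 H]]; try lra.
  exists c1, c2. intros x hx.
  pose proof (Rmin_l x (1/4)). pose proof (Rmin_r x (1/4)).
  pose proof (Rmax_l x (3/4)). pose proof (Rmax_r x (3/4)).
  destruct (visc_solution_repr_on (Rmin x (1/4)) (Rmax x (3/4))) as [c1' [c2' H']];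
    [apply Rmin_pos; lra | lra | apply Rmax_lub_lt; lra |].
  pose proof (H (1/4) ltac:(lra)). pose proof (H (3/4) ltac:(lra)).
  pose proof (H' (1/4) ltac:(lra)). pose proof (H' (3/4) ltac:(lra)).
  pose proof (Sfun_lt mu (1/4) (3/4) hmu ltac:(lra) ltac:(lra) ltac:(lra)).
  assert (c2 = c2').
  { apply (Rmult_eq_reg_r (Sfun mu (3/4) - Sfun mu (1/4))); lra. }
  subst c2'. assert (c1 = c1') by lra. subst c1'.
  apply H'. lra.
Qed.

End ViscositySolution.

Lemma visc_sub_both_of_voronovskaya mu g x0 : 0 < mu -> 0 <= x0 <= 1 ->
  (forall t, continuity_pt g t) ->
  is_lim_seq (fun n => INR n * (kantorovich mu n g x0 - g x0)) 0 ->
  visc_sub mu g x0 /\ visc_sub mu (fun t => - g t) x0.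
Proof.
  intros hmu hx hg hl. split; [now apply visc_sub_of_voronovskaya |].
  apply visc_sub_of_voronovskaya; auto; [intro; now apply continuity_pt_opp |].
  apply (is_lim_seq_of_eq _ (-1 * 0)); [| ring].
  apply (is_lim_seq_ext (fun n => -1 * (INR n * (kantorovich mu n g x0 - g x0))));
    [| apply is_lim_seq_mult'; [apply is_lim_seq_const | exact hl]].
  intro n.
  rewrite (kantorovich_ext mu n (fun t => - g t) (fun t => 0 + -1 * g t)) by (intros; ring).
  rewrite kantorovich_lin, kantorovich_const; [ring | | exact hg].
  intro. apply continuity_pt_const. now intros ? ?.
Qed.

Lemma lnmu_pos mu t : 0 < mu -> 0 <= t -> 0 < lnmu mu t.
Proof.
  intros. unfold lnmu. replace (1 + mu + t) with (1 + (mu + t)) by ring. apply ln_1p_pos. lra.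
Qed.

Definition clamp01 (t : R) : R := Rmax 0 (Rmin 1 t).

Lemma clamp01_id t : 0 <= t <= 1 -> clamp01 t = t.
Proof. intro. unfold clamp01. rewrite Rmin_right, Rmax_right; lra. Qed.

Lemma clamp01_bounds t : 0 <= clamp01 t <= 1.
Proof. unfold clamp01, Rmax, Rmin. repeat destruct Rle_dec; lra. Qed.

Lemma clamp01_lipschitz s t : Rabs (clamp01 s - clamp01 t) <= Rabs (s - t).
Proof.
  unfold clamp01, Rmax, Rmin. repeat destruct Rle_dec; unfold Rabs; repeat destruct Rcase_abs; lra.
Qed.

Lemma clamp01_continuity_pt t : continuity_pt clamp01 t.
Proof.
  intros e he. exists e. split; [exact he |]. intros z [_ hz]. simpl in *. unfold R_dist in *.
  pose proof (clamp01_lipschitz z t). lra.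
Qed.

Section ContinuousOnUnitInterval.

Variables (mu : R) (f : R -> R).
Hypotheses (hmu : 0 < mu)
  (hf : forall x, 0 <= x <= 1 ->
        filterlim f (within (fun y => 0 <= y <= 1) (locally x)) (locally (f x))).

(* A continuous extension of [f_mu] to [R], so that the lemmas on [kantorovich] apply. *)
Definition fmu_ext (t : R) : R := fmu mu f (clamp01 t).

Lemma fmu_ext_eq t : 0 <= t <= 1 -> fmu_ext t = fmu mu f t.
Proof. intro. unfold fmu_ext. now rewrite clamp01_id. Qed.

Lemma fmu_ext_continuity_pt t : continuity_pt fmu_ext t.
Proof.
  assert (hcl : filterlim clamp01 (locally t)
                  (within (fun y => 0 <= y <= 1) (locally (clamp01 t)))).
  { intros P [eps HP]. exists eps. intros z hz. apply HP; [| apply clamp01_bounds].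
    change (Rabs (clamp01 z - clamp01 t) < eps).
    pose proof (clamp01_lipschitz z t). change (Rabs (z - t) < eps) in hz. lra. }
  apply (continuity_pt_div (fun t => f (clamp01 t)) (fun t => lnmu mu (clamp01 t))).
  - apply continuity_pt_filterlim.
    eapply filterlim_comp; [exact hcl | apply hf, clamp01_bounds].
  - apply (continuity_pt_comp clamp01 (lnmu mu)).
    + apply clamp01_continuity_pt.
    + pose proof (clamp01_bounds t).
      apply (is_derive_continuity_pt _ _ (/ (1 + mu + clamp01 t))).
      unfold lnmu. auto_derive; [lra | field; lra].
  - apply Rgt_not_eq, lnmu_pos, clamp01_bounds; lra.
Qed.

Lemma fmu_bounded : exists M, forall t, 0 < t < 1 -> Rabs (fmu mu f t) <= M.
Proof.
  destruct (continuity_pt_bounded01 fmu_ext fmu_ext_continuity_pt) as [M [_ hM]].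
  exists M. intros t ht. rewrite <- fmu_ext_eq by lra. apply hM. lra.
Qed.

Lemma fmu_const_of_repr c1 c2 :
  (forall x, 0 < x < 1 -> fmu mu f x = c1 + c2 * Sfun mu x) ->
  forall x, 0 < x < 1 -> fmu mu f x = c1.
Proof.
  intros hrep x hx. destruct fmu_bounded as [M hM].
  rewrite hrep, (repr_bounded_const mu (fmu mu f) c1 c2 M); auto. ring.
Qed.

(* [L_n^K f = ln_mu T_n f_mu] with [ln_mu (x) > 0], so the two rates coincide. *)
Lemma fmu_ext_voronovskaya :
  (forall x, 0 < x < 1 -> is_lim_seq (fun n => INR n * Rabs (LK mu n f x - f x)) 0) ->
  forall x, 0 < x < 1 ->
    is_lim_seq (fun n => INR n * (kantorovich mu n fmu_ext x - fmu_ext x)) 0.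
Proof.
  intros H x hx. pose proof (lnmu_pos mu x hmu ltac:(lra)).
  assert (H' : is_lim_seq (fun n => INR n * (LK mu n f x - f x)) 0).
  { apply is_lim_seq_abs_0. eapply is_lim_seq_ext; [| exact (H x hx)].
    intro n. rewrite Rabs_mult, (Rabs_right (INR n)); [reflexivity | apply Rle_ge, pos_INR]. }
  apply (is_lim_seq_of_eq _ (/ lnmu mu x * 0)); [| ring].
  apply (is_lim_seq_ext (fun n => / lnmu mu x * (INR n * (LK mu n f x - f x))));
    [| apply is_lim_seq_mult'; [apply is_lim_seq_const | exact H']].
  intro n. rewrite (kantorovich_ext mu n fmu_ext (fmu mu f)) by (intros; apply fmu_ext_eq; lra).
  rewrite fmu_ext_eq, LK_kantorovich by lra. unfold fmu. field. lra.
Qed.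

Lemma fmu_repr_of_voronovskaya :
  (forall x, 0 < x < 1 -> is_lim_seq (fun n => INR n * Rabs (LK mu n f x - f x)) 0) ->
  exists c1 c2, forall x, 0 < x < 1 -> fmu mu f x = c1 + c2 * Sfun mu x.
Proof.
  intro H.
  destruct (visc_solution_repr mu fmu_ext hmu fmu_ext_continuity_pt) as (c1 & c2 & hrep).
  - intros x0 hx0. apply visc_sub_both_of_voronovskaya; auto using fmu_ext_continuity_pt; [lra |].
    now apply fmu_ext_voronovskaya.
  - exists c1, c2. intros x hx. rewrite <- fmu_ext_eq by lra. now apply hrep.
Qed.

End ContinuousOnUnitInterval.

Lemma ode_of_fmu_const mu f c :
  (forall x, 0 < x < 1 -> fmu mu f x = c) ->
  exists d1 d2 : R -> R, forall x, 0 < x < 1 ->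
    is_derive (fmu mu f) x (d1 x) /\ is_derive d1 x (d2 x) /\
    Acoef mu x * d1 x + Bcoef x * d2 x = 0.
Proof.
  intro hc. exists (fun _ => 0), (fun _ => 0). intros x hx. split; [| split].
  - apply (is_derive_ext_loc (fun _ => c)); [| apply (is_derive_const c)].
    apply (locally_interval x 0 1); auto. intros t ht. now rewrite hc.
  - apply (is_derive_const 0).
  - ring.
Qed.

Lemma LK_exact_of_fmu_const mu f c n x : 0 < mu -> 0 < x < 1 ->
  (forall t, 0 < t < 1 -> fmu mu f t = c) -> LK mu n f x = f x.
Proof.
  intros hmu hx hc. pose proof (lnmu_pos mu x hmu ltac:(lra)).
  rewrite LK_kantorovich, (kantorovich_ext mu n (fmu mu f) (fun _ => c)) by auto.
  rewrite kantorovich_const.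
  rewrite <- (hc x hx). unfold fmu. field. lra.
Qed.

Theorem theorem5p1 (mu : R) (f : R -> R) (hmu : 0 < mu)
  (hf : forall x, 0 <= x <= 1 ->
        filterlim f (within (fun y => 0 <= y <= 1) (locally x)) (locally (f x))) :
  (forall x, 0 < x < 1 ->
     is_lim_seq (fun n => INR n * Rabs (LK mu n f x - f x)) 0)
  <->
  (exists d1 d2 : R -> R,
     forall x, 0 < x < 1 ->
       is_derive (fmu mu f) x (d1 x) /\ is_derive d1 x (d2 x) /\
       Acoef mu x * d1 x + Bcoef x * d2 x = 0).
Proof.
  split.
  - intro H. destruct (fmu_repr_of_voronovskaya mu f hmu hf H) as (c1 & c2 & hrep).
    exact (ode_of_fmu_const mu f c1 (fmu_const_of_repr mu f hmu hf c1 c2 hrep)).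
  - intros (d1 & d2 & H) x hx.
    destruct (ode_solution_repr mu (fmu mu f) d1 d2 hmu H) as (c1 & c2 & hrep).
    apply (is_lim_seq_ext (fun _ => 0)); [| apply is_lim_seq_const]. intro n.
    rewrite (LK_exact_of_fmu_const mu f c1 n x hmu hx (fmu_const_of_repr mu f hmu hf c1 c2 hrep)).
    rewrite Rminus_diag_eq, Rabs_R0 by reflexivity. ring.
Qed.
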